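(* Let $T_1$ and $T_2$ be two rooted binary trees, each with $n$ leaves labelled by the same set of $n$ distinct labels. Let $u_1,u_2,\dots,u_k$ be a root-to-leaf path of $\mathit{MCD}(T_1)$. Then $\sum_{i=1}^{k}|T_2(u_i)|=\mathrm{O}(n)$.
   Context: A rooted binary tree is one in which every internal node has exactly two children, a left and a right child. $|T|$ denotes the number of nodes of a tree $T$. A component of $T_1$ is a connected set of its nodes. An edge of $T_1$ crosses the boundary of $C$ if exactly one of its endpoints lies in $C$. It is an edge from below if its endpoint in $C$ is the parent endpoint. A centroid of a component $C$ is a node $u\in C$ such that every connected component of $C\setminus\{u\}$ has at most $|C|/2$ nodes. Removing a node $s$ from $C$ leaves at most three connected components: $C_l$ containing the left child of $s$, $C_r$ containing the right child of $s$, and $C_p$ containing the parent of $s$, each intersected with $C$ and possibly empty. The modified centroid decomposition $\mathit{MCD}(T_1)$ is a ternary tree built recursively, starting from the component $C=T_1$. For the current component $C$ a splitting node $s$ is chosen. If $C$ has no edge from below, $s$ is a centroid $c$ of $C$. Otherwise $C$ has exactly one edge $(x,y)$ from below with $x\in C$; let $c$ be a centroid of $C$, and let $s$ be the lowest common ancestor of $x$ and $c$. The node $u$ of $\mathit{MCD}(T_1)$ corresponding to $C$ stores $s$, and we write $C_u=C$. The children of $u$ are the nodes corresponding to the nonempty components among $C_l,C_r,C_p$ obtained by removing $s$ from $C$. For a node $u$ of $\mathit{MCD}(T_1)$, let $\Lambda=L(C_u)$ be the set of labels of the leaves of $T_1$ lying in $C_u$. Then $T_2(u)$ is the contraction of $T_2$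 with respect to $\Lambda$, obtained in three steps: 1. prune all leaves of $T_2$ whose labels are not in $\Lambda$; 2. repeatedly prune internal nodes that have no children; 3. repeatedly contract internal nodes that have exactly one child. The result is a binary tree with leaf set $\Lambda$. *)

From HB Require Import structures.
From mathcomp Require Import all_boot.
From mathcomp Require Import boolp.

Set Implicit Arguments.
Unset Strict Implicit.
Unset Printing Implicit Defensive.

Inductive tree := Leaf of nat | Node of tree & tree.

Fixpoint leaves (t : tree) : seq nat :=
  match t with Leaf a => [:: a] | Node l r => leaves l ++ leaves r end.

(** Nodes are addressed by their root-to-node path: false = left, true = right. *)
Fixpoint nodes (t : tree) : seq (seq bool) :=
  match t with
  | Leaf _ => [:: [::]]
  | Node l r => [::] :: map (cons false) (nodes l) ++ map (cons true) (nodes r)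
  end.

Definition tsize (t : tree) : nat := size (nodes t).

Fixpoint subtree (t : tree) (p : seq bool) : option tree :=
  match p, t with
  | [::], _ => Some t
  | b :: q, Node l r => subtree (if b then r else l) q
  | _ :: _, Leaf _ => None
  end.

Definition label_at (t : tree) (p : seq bool) : option nat :=
  if subtree t p is Some (Leaf a) then Some a else None.

Definition lchild (p : seq bool) := rcons p false.
Definition rchild (p : seq bool) := rcons p true.
Definition parent (p : seq bool) := take (size p).-1 p.

Definition adj : rel (seq bool) := fun x y =>
  [|| y == lchild x, y == rchild x, x == lchild y | x == rchild y].

Fixpoint lca (x y : seq bool) : seq bool :=
  match x, y with
  | a :: x', b :: y' => if a == b then a :: lca x' y' else [::]
  | _, _ => [::]
  end.

(** Sets of nodes of T1 are boolean predicates on addresses; their cardinality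
    counts the nodes of t satisfying them. *)
Definition card (t : tree) (C : pred (seq bool)) : nat := count C (nodes t).

Definition reach (S : pred (seq bool)) (x y : seq bool) : Prop :=
  exists p : seq (seq bool), [/\ path adj x p, last x p = y & all S (x :: p)].

(** the connected component of S containing x (empty if x \notin S) *)
Definition comp (S : pred (seq bool)) (x : seq bool) : pred (seq bool) :=
  fun y => `[< reach S x y >].

Definition setD1p (C : pred (seq bool)) (u : seq bool) : pred (seq bool) :=
  [pred y | (y != u) && C y].

Definition centroid (t : tree) (C : pred (seq bool)) (u : seq bool) : Prop :=
  C u /\ u \in nodes t /\
  forall x, setD1p C u x -> 2 * card t (comp (setD1p C u) x) <= card t C.

Definition edge_below (t : tree) (C : pred (seq bool)) (x y : seq bool) : Prop :=
  [/\ x \in nodes t, y \in nodes t, (y = lchild x \/ y = rchild x), C x & ~~ C y].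

Definition splitting_node (t : tree) (C : pred (seq bool)) (s : seq bool) : Prop :=
  exists c, centroid t C c /\
    ((~ (exists x y, edge_below t C x y)) /\ s = c
     \/ exists x y, edge_below t C x y /\ s = lca x c).

Definition C_l (C : pred (seq bool)) (s : seq bool) := comp (setD1p C s) (lchild s).
Definition C_r (C : pred (seq bool)) (s : seq bool) := comp (setD1p C s) (rchild s).
Definition C_p (C : pred (seq bool)) (s : seq bool) : pred (seq bool) :=
  if s is [::] then pred0 else comp (setD1p C s) (parent s).

Definition nonempty (t : tree) (C : pred (seq bool)) : bool := has C (nodes t).

(** C' is the component of a child of the MCD node with component C. *)
Definition mcd_step (t : tree) (C C' : pred (seq bool)) : Prop :=
  exists s, splitting_node t C s /\
    (C' = C_l C s \/ C' = C_r C s \/ C' = C_p C s) /\ nonempty t C'.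

Definition mcd_leaf (t : tree) (C : pred (seq bool)) : Prop :=
  exists s, splitting_node t C s /\
    [/\ ~~ nonempty t (C_l C s), ~~ nonempty t (C_r C s) & ~~ nonempty t (C_p C s)].

Fixpoint chainP (T : Type) (r : T -> T -> Prop) (x : T) (s : seq T) : Prop :=
  match s with [::] => True | y :: s' => r x y /\ chainP r y s' end.

(** Cs = [:: C_{u_1}; ...; C_{u_k}] is the list of components along a
    root-to-leaf path u_1, ..., u_k of MCD(t). *)
Definition mcd_root_leaf_path (t : tree) (Cs : seq (pred (seq bool))) : Prop :=
  exists C0 rest, [/\ Cs = C0 :: rest, C0 =1 (fun p => p \in nodes t),
                      chainP (mcd_step t) C0 rest & mcd_leaf t (last C0 rest)].

Definition leaf_labels (t : tree) (C : pred (seq bool)) : pred nat :=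
  fun a => has (fun p => C p && (label_at t p == Some a)) (nodes t).

Fixpoint contract (L : pred nat) (t : tree) : option tree :=
  match t with
  | Leaf a => if L a then Some (Leaf a) else None
  | Node l r =>
      match contract L l, contract L r with
      | Some l', Some r' => Some (Node l' r')
      | Some l', None => Some l'
      | None, Some r' => Some r'
      | None, None => None
      end
  end.

Definition osize (o : option tree) : nat := if o is Some t then tsize t else 0.

(** |T2(u)| for the MCD node u with component C of T1. *)
Definition T2_size (t1 t2 : tree) (C : pred (seq bool)) : nat :=
  osize (contract (leaf_labels t1 C) t2).

From mathcomp Require Import all_boot zify boolp.

Set Implicit Arguments.
Unset Strict Implicit.
Unset Printing Implicit Defensive.

(* Since T2(u) is a contraction onto the labels of the leaves of C_u,
   |T2(u)| <= 2|L(C_u)| - 1 <= 2|C_u|, so it suffices to show that the sizes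
   |C_u| along the path sum to at most 4|T1| < 8n.  All edges from below of a
   component on the path leave one node x.  If there is no such edge, s is a
   centroid and every child component has at most half the size.  Otherwise
   s = lca(x, c): the children of s avoiding c lie inside components of C \ {c}
   and are halved, while the child towards c does not contain x, hence has no
   edge from below, and its own children are halved.  So the size halves at
   least every second step, and the sum is at most 4|C_root|. *)

Section PrefixRcons.

Variable T : eqType.
Implicit Types (p s c : seq T) (b : T).

Lemma prefix_rconsr p s b : prefix p s -> prefix p (rcons s b).
Proof. by move=> ps; apply: prefix_trans ps (prefix_rcons _ _). Qed.

Lemma prefix_rconsP p s b : prefix p (rcons s b) -> prefix p s \/ p = rcons s b.
Proof.
elim: s p => [|a s IH] [|x p] /=; try by left.
- by case/andP=> /eqP ->; case: p => // _; right.
- by case/andP=> /eqP -> /IH [ps|->]; [left; rewrite /= eqxx | right].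
Qed.

Lemma prefix_rcons_next s c : prefix s c -> s != c -> exists b, prefix (rcons s b) c.
Proof.
case/prefixP=> [[|b w] ->]; first by rewrite cats0 eqxx.
by move=> _; exists b; rewrite -cat_rcons prefix_prefix.
Qed.

Lemma prefix_rcons_uniq s c b b' :
  prefix (rcons s b) c -> prefix (rcons s b') c -> b = b'.
Proof. by rewrite !prefixE !size_rcons => /eqP -> /eqP /rcons_inj []. Qed.

End PrefixRcons.

Lemma lca_prefixl x y : prefix (lca x y) x.
Proof.
elim: x y => [|a x IH] [|b y] //=; case: ifP => // _; rewrite eqxx; exact: IH.
Qed.

Lemma lca_prefixr x y : prefix (lca x y) y.
Proof.
elim: x y => [|a x IH] [|b y] //=; case: ifP => // /eqP ->; rewrite eqxx; exact: IH.
Qed.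

Lemma prefix_lca p x y : prefix p x -> prefix p y -> prefix p (lca x y).
Proof.
elim: x y p => [|a x IH] [|b y] [|c p] //=; first by rewrite prefix0s.
by move=> /andP[/eqP <- px] /andP[/eqP <- py]; rewrite eqxx /= eqxx; apply: IH.
Qed.

Lemma parent_rcons (s : seq bool) b : parent (rcons s b) = s.
Proof. by rewrite /parent size_rcons /= -cats1 take_size_cat. Qed.

Lemma parent_not_prefix (s : seq bool) : s != [::] -> ~~ prefix s (parent s).
Proof.
case/lastP: s => // s b _; rewrite parent_rcons; apply/negP => /size_prefix.
by rewrite size_rcons ltnn.
Qed.

Lemma adj_child x y : y = lchild x \/ y = rchild x -> adj x y.
Proof. by case=> ->; rewrite /adj eqxx ?orbT. Qed.

Lemma adjP u v : adj u v -> (exists b, v = rcons u b) \/ (exists b, u = rcons v b).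
Proof.
by case/or4P=> /eqP ->; [left; exists false | left; exists true
                        | right; exists false | right; exists true].
Qed.

Definition adj_closed (S P : pred (seq bool)) : Prop :=
  forall u v, P u -> S v -> adj u v -> P v.

Section Reach.

Variable S : pred (seq bool).

Lemma reach_ends x y : reach S x y -> S x /\ S y.
Proof.
case=> p [_ <- /= /andP[Sx Sp]]; split => //.
by elim: p x Sx Sp => //= z p IH x _ /andP[Sz Sp]; apply: IH.
Qed.

Lemma reach_rcons x y z : reach S x y -> S z -> adj y z -> reach S x z.
Proof.
case=> p [xp <- Sp] Sz yz; exists (rcons p z); split.
- by rewrite rcons_path xp yz.
- by rewrite last_rcons.
- by rewrite -rcons_cons all_rcons Sz Sp.
Qed.

Lemma reach_sub (S' : pred (seq bool)) x y :
  subpred S S' -> reach S x y -> reach S' x y.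
Proof. by move=> SS' [p [xp py Sp]]; exists p; split => //; apply: sub_all Sp. Qed.

Lemma reach_closed (P : pred (seq bool)) x y :
  adj_closed S P -> P x -> reach S x y -> reach (predI S P) x y.
Proof.
move=> clP Px [p [xp <- Sp]]; elim: p x Px xp Sp => [|z p IH] x Px /=.
  by move=> _ /andP[Sx _]; exists [::]; split => //=; rewrite Sx Px.
case/andP=> xz zp /and3P[Sx Sz Sp].
have [|q [zq <- PSq]] := IH z (clP _ _ Px Sz xz) zp; first by rewrite /= Sz.
by exists (z :: q); split; rewrite //= ?xz //= Sx Px.
Qed.

End Reach.

Lemma compP S x y : reflect (reach S x y) (comp S x y).
Proof. exact: asboolP. Qed.

Lemma comp_start S x y : comp S x y -> S x.
Proof. by move/compP/reach_ends=> []. Qed.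

Lemma comp_closed (S P : pred (seq bool)) x y :
  adj_closed S P -> P x -> comp S x y -> P y.
Proof.
by move=> clP Px /compP/(reach_closed clP Px) /reach_ends [_ /andP[]].
Qed.

Lemma comp_closed_sub (S P S' : pred (seq bool)) x y :
  adj_closed S P -> P x -> subpred (predI S P) S' -> comp S x y -> comp S' x y.
Proof.
by move=> clP Px sub /compP/(reach_closed clP Px)/(reach_sub sub)/compP.
Qed.

Section SplitComponents.

Variable C : pred (seq bool).

Lemma comp_setD1p_sub s x y : comp (setD1p C s) x y -> C y.
Proof. by move/compP/reach_ends=> [_ /andP[]]. Qed.

Lemma adj_closed_prefix_rcons s b : adj_closed (setD1p C s) (prefix (rcons s b)).
Proof.
move=> u v su /andP[vs _] /adjP [[b' ->]|[b' uv]]; first exact: prefix_rconsr.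
move: su; rewrite uv => /prefix_rconsP [//|/rcons_inj [vs' _]].
by rewrite vs' eqxx in vs.
Qed.

Lemma adj_closed_not_prefix s : adj_closed (setD1p C s) (fun u => ~~ prefix s u).
Proof.
move=> u v su /andP[vs _] /adjP [[b' vu]|[b' uv]].
  apply/negP; rewrite vu => /prefix_rconsP [us|sv]; first by rewrite us in su.
  by rewrite vu -sv eqxx in vs.
by apply: contra su; rewrite uv; apply: prefix_rconsr.
Qed.

Lemma comp_rcons_prefix s b y : comp (setD1p C s) (rcons s b) y -> prefix (rcons s b) y.
Proof. exact: comp_closed (@adj_closed_prefix_rcons s b) (prefix_refl _). Qed.

Lemma comp_parent_not_prefix s y : s != [::] ->
  comp (setD1p C s) (parent s) y -> ~~ prefix s y.
Proof.
by move=> s0; apply: comp_closed (@adj_closed_not_prefix s) (parent_not_prefix s0).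
Qed.

Lemma comp_rcons_sub s c b : ~~ prefix (rcons s b) c ->
  subpred (comp (setD1p C s) (rcons s b)) (comp (setD1p C c) (rcons s b)).
Proof.
move=> sbc y; apply: comp_closed_sub (@adj_closed_prefix_rcons s b) (prefix_refl _) _.
move=> u /andP[/andP[us Cu] sbu]; rewrite /setD1p /= Cu andbT.
by apply: contraNneq sbc => <-.
Qed.

Lemma comp_parent_sub s c : s != [::] -> prefix s c ->
  subpred (comp (setD1p C s) (parent s)) (comp (setD1p C c) (parent s)).
Proof.
move=> s0 sc y; apply: comp_closed_sub (@adj_closed_not_prefix s) (parent_not_prefix s0) _.
move=> u /andP[/andP[us Cu] su]; rewrite /setD1p /= Cu andbT.
by apply: contraNneq su => ->.
Qed.

Lemma C_pE s : s != [::] -> C_p C s = comp (setD1p C s) (parent s).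
Proof. by case: s. Qed.

End SplitComponents.

Definition split_child (C : pred (seq bool)) s (C' : pred (seq bool)) : Prop :=
  C' = C_l C s \/ C' = C_r C s \/ C' = C_p C s.

Lemma split_child_sub C s C' : split_child C s C' -> subpred C' C.
Proof.
case=> [->|[->|->]] y; try exact: comp_setD1p_sub.
by case: s => //= ? ?; apply: comp_setD1p_sub.
Qed.

Section TreeComponents.

Variable t : tree.

Lemma centroid_comp_half C c z :
  centroid t C c -> 2 * card t (comp (setD1p C c) z) <= card t C.
Proof.
case=> _ [_ half]; have [/half //|Sz] := boolP (setD1p C c z).
rewrite /card (eq_count (a2 := pred0)) ?count_pred0 // => y.
by apply/negbTE/negP => /comp_start; apply/negP.
Qed.

Lemma centroid_sub_half C c z D : centroid t C c ->
  subpred D (comp (setD1p C c) z) -> 2 * card t D <= card t C.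
Proof.
move=> cC DC; apply: leq_trans (centroid_comp_half z cC).
by rewrite leq_mul2l (sub_count DC) orbT.
Qed.

Lemma split_child_centroid_half C c C' : centroid t C c -> split_child C c C' ->
  2 * card t C' <= card t C.
Proof.
move=> cC [->|[->|->]]; try exact: centroid_comp_half.
by case: c cC => [|a c] cC /=; [rewrite /card count_pred0 | apply: centroid_comp_half].
Qed.

Lemma edge_below_comp C s z x y :
  edge_below t (comp (setD1p C s) z) x y -> edge_below t C x y \/ y = s.
Proof.
case=> xt yt xy Dx Dy.
have : ~~ setD1p C s y.
  by apply: contra Dy => Sy; apply/compP; apply: reach_rcons Sy (adj_child xy); apply/compP.
rewrite /setD1p /= negb_and negbK => /orP[/eqP ->|Cy]; first by right.
by left; split => //; apply: comp_setD1p_sub Dx.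
Qed.

Lemma edge_below_comp_rcons C s b x y :
  edge_below t (comp (setD1p C s) (rcons s b)) x y ->
  edge_below t C x y /\ prefix (rcons s b) x.
Proof.
move=> e; have sbx : prefix (rcons s b) x by case: e => _ _ _ /comp_rcons_prefix.
split=> //; case: (edge_below_comp e) => // ys; case: e => _ _ xy _ _.
move/size_prefix: sbx; rewrite size_rcons.
by case: xy; rewrite -ys => ->; rewrite /lchild /rchild size_rcons; lia.
Qed.

Lemma edge_below_comp_parent C s x y : s != [::] ->
  edge_below t (comp (setD1p C s) (parent s)) x y ->
  edge_below t C x y /\ ~~ prefix s x \/ x = parent s.
Proof.
move=> s0 e; case: (edge_below_comp e) => [eC|ys].
  by left; split=> //; case: e => _ _ _ /(comp_parent_not_prefix s0).
by right; case: e => _ _ + _ _; rewrite -ys => -[] ->; rewrite parent_rcons.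
Qed.

End TreeComponents.

Section MCDPath.

Variable t : tree.

(* The paper's "exactly one edge from below", weakened to the form the
   recursion preserves: all edges from below leave the same node. *)
Definition one_parent_below (C : pred (seq bool)) : Prop :=
  forall x y x' y', edge_below t C x y -> edge_below t C x' y' -> x = x'.

Definition no_edge_below (C : pred (seq bool)) : Prop :=
  forall x y, ~ edge_below t C x y.

Lemma no_edge_one_parent C : no_edge_below C -> one_parent_below C.
Proof. by move=> noC x y x' y' /noC. Qed.

Lemma split_child_one_parent C s C' :
  (forall x y, edge_below t C x y -> prefix s x) ->
  one_parent_below C -> split_child C s C' -> one_parent_below C'.
Proof.
move=> sx oneC [->|[->|->]] x y x' y'.
1,2: by move=> /edge_below_comp_rcons [e _] /edge_below_comp_rcons [e' _]; apply: oneC e e'.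
have [-> [] //|s0] := eqVneq s [::].
have from_parent x1 y1 : edge_below t (C_p C s) x1 y1 -> x1 = parent s.
  rewrite C_pE // => /(edge_below_comp_parent s0) [[/sx sx1]|//].
  by rewrite sx1.
by move=> /from_parent -> /from_parent ->.
Qed.

Lemma split_child_lca_half C c s x0 y0 C' :
  centroid t C c -> one_parent_below C -> edge_below t C x0 y0 -> s = lca x0 c ->
  split_child C s C' -> 2 * card t C' <= card t C \/ no_edge_below C'.
Proof.
move=> cC oneC e0 es sC'.
have [sc|sc] := eqVneq s c.
  by left; apply: split_child_centroid_half cC _; rewrite -sc.
have sc_prefix : prefix s c by rewrite es lca_prefixr.
have [b sbc] := prefix_rcons_next sc_prefix sc.
have sbx0 : ~~ prefix (rcons s b) x0.
  apply/negP => /prefix_lca/(_ sbc); rewrite -es => /size_prefix.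
  by rewrite size_rcons ltnn.
have half_or_none b' : 2 * card t (comp (setD1p C s) (rcons s b')) <= card t C \/
    no_edge_below (comp (setD1p C s) (rcons s b')).
  have [->|b'b] := eqVneq b' b.
    (* the child towards c: its edges from below would leave x0, which lies outside it *)
    right=> x y /edge_below_comp_rcons [e sbx].
    by move: sbx; rewrite (oneC _ _ _ _ e e0); apply/negP.
  left; apply: centroid_sub_half cC (comp_rcons_sub _).
  by apply: contra b'b => /(prefix_rcons_uniq sbc) ->.
case: sC' => [->|[->|->]]; [exact: half_or_none false | exact: half_or_none true |].
have [->|s0] := eqVneq s [::]; first by left; rewrite /card count_pred0.
by left; rewrite C_pE //; apply: centroid_sub_half cC (comp_parent_sub s0 sc_prefix).
Qed.

Lemma mcd_step_sub C C' : mcd_step t C C' -> card t C' <= card t C.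
Proof. by case=> s [_ [/split_child_sub sub _]]; apply: sub_count. Qed.

Lemma mcd_step_one_parent C C' :
  one_parent_below C -> mcd_step t C C' -> one_parent_below C'.
Proof.
move=> oneC [s [[c [cC [[noC ->]|[x [y [e ->]]]]]] [sC' _]]].
  by apply: split_child_one_parent sC' => // x y e; case: noC; exists x, y.
apply: split_child_one_parent sC' => // x' y' e'.
by rewrite (oneC _ _ _ _ e' e) lca_prefixl.
Qed.

Lemma mcd_step_half_or_no_edge C C' : one_parent_below C -> mcd_step t C C' ->
  2 * card t C' <= card t C \/ no_edge_below C'.
Proof.
move=> oneC [s [[c [cC [[_ ->]|[x [y [e es]]]]]] [sC' _]]].
  by left; apply: split_child_centroid_half cC sC'.
exact: split_child_lca_half cC oneC e es sC'.
Qed.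

Lemma mcd_step_no_edge_half C C' : no_edge_below C -> mcd_step t C C' ->
  2 * card t C' <= card t C.
Proof.
move=> noC [s [[c [cC [[_ ->]|[x [y [e _]]]]]] [sC' _]]]; last by case: (noC x y).
exact: split_child_centroid_half cC sC'.
Qed.

Lemma mcd_chain_card_sum C Cs : one_parent_below C -> chainP (mcd_step t) C Cs ->
  \sum_(D <- C :: Cs) card t D <= 4 * card t C.
Proof.
have [n] := ubnP (size Cs); elim: n C Cs => // n IH C [|C1 Cs] /ltnSE sizeCs oneC /=.
  by rewrite big_seq1; lia.
case=> step1 chain1; rewrite big_cons.
have le1 := mcd_step_sub step1; have one1 := mcd_step_one_parent oneC step1.
have [half1|no1] := mcd_step_half_or_no_edge oneC step1.
  by have := IH C1 Cs sizeCs one1 chain1; lia.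
case: Cs sizeCs chain1 => [|C2 Cs] sizeCs /=; first by rewrite big_seq1; lia.
case=> step2 chain2; have half2 := mcd_step_no_edge_half no1 step2.
have := IH C2 Cs (ltnW sizeCs) (mcd_step_one_parent one1 step2) chain2.
by rewrite !big_cons; lia.
Qed.

End MCDPath.

Lemma tsize_node l r : tsize (Node l r) = (tsize l + tsize r).+1.
Proof. by rewrite /tsize /= size_cat !size_map. Qed.

Lemma tsize_gt0 t : 0 < tsize t.
Proof. by case: t. Qed.

Lemma tsize_lt_leaves t : tsize t < 2 * size (leaves t).
Proof. by elim: t => //= l IHl r IHr; rewrite tsize_node size_cat; lia. Qed.

Lemma contract_size (L : pred nat) t : osize (contract L t) <= (2 * count L (leaves t)).-1.
Proof.
elim: t => [a|l IHl r IHr] /=; first by case: (L a).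
rewrite count_cat.
case: (contract L l) IHl => [l'|] /= IHl; case: (contract L r) IHr => [r'|] /= IHr;
  try lia.
by rewrite tsize_node; move: (tsize_gt0 l') (tsize_gt0 r'); lia.
Qed.

Lemma count_leaf_labels t C :
  uniq (leaves t) -> count (leaf_labels t C) (leaves t) <= card t C.
Proof.
move=> uniq_t; rewrite -size_filter.
apply: leq_trans (_ : size (pmap (label_at t) (filter C (nodes t))) <= _).
  apply: uniq_leq_size; first exact: filter_uniq.
  move=> a; rewrite mem_filter mem_pmap => /andP[/hasP [p pt /andP[Cp /eqP <-]] _].
  by rewrite map_f // mem_filter Cp.
by rewrite size_pmap (leq_trans (count_size _ _)) ?size_filter.
Qed.

Lemma T2_size_le t1 t2 C : uniq (leaves t1) -> perm_eq (leaves t1) (leaves t2) ->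
  T2_size t1 t2 C <= 2 * card t1 C.
Proof.
move=> uniq1 /permP perm12; apply: leq_trans (contract_size _ _) _.
by rewrite -perm12 (leq_trans (leq_pred _)) // leq_mul2l count_leaf_labels ?orbT.
Qed.

Theorem lemma3 :
  exists K : nat, forall (n : nat) (t1 t2 : tree) (Cs : seq (pred (seq bool))),
    uniq (leaves t1) -> perm_eq (leaves t1) (leaves t2) -> size (leaves t1) = n ->
    mcd_root_leaf_path t1 Cs ->
    \sum_(C <- Cs) T2_size t1 t2 C <= K * n.
Proof.
exists 16 => n t1 t2 Cs uniq1 perm12 <- [C0 [rest [-> C0T chain _]]].
have noC0 : no_edge_below t1 C0 by move=> x y [_ yt _ _ /negP]; rewrite C0T yt.
have sum_T2 : \sum_(C <- C0 :: rest) T2_size t1 t2 C <=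
               2 * \sum_(C <- C0 :: rest) card t1 C.
  by rewrite big_distrr leq_sum // => C _; apply: T2_size_le.
have sum_card := mcd_chain_card_sum (no_edge_one_parent noC0) chain.
have card_C0 : card t1 C0 <= tsize t1 := count_size _ _.
by have := tsize_lt_leaves t1; lia.
Qed.
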